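(* Every right coideal $\mathcal{X}$ of $\mathcal{U}$ is the direct sum $\mathcal{X}=\bigoplus_{\mu\in\mathbb{C}^\times}[\mathcal{X}]_\mu$ of its homogeneous components $[\mathcal{X}]_\mu:=\mathcal{X}\cap[\mathcal{U}]_\mu$, where $[\mathcal{U}]_\mu:=\mathrm{Lin}\{F^{(i)}f_\mu E^{(j)}G^{(k)}: i,j,k\in\mathbb{N}_0\}$.
   Context: Let $q\in\mathbb{C}$ be transcendental (in particular $q\ne0$ and not a root of unity). $\mathcal{U}$ is the unital algebra generated by $E,F,G$ and $f_\mu$ ($\mu\in\mathbb{C}^\times$) with relations $f_\mu f_\nu=f_{\mu\nu}$, $f_\mu E=\mu^2Ef_\mu$, $f_\mu F=\mu^{-2}Ff_\mu$, $f_\mu G=Gf_\mu$, $GE=E(G+2)$, $GF=F(G-2)$, $EF-FE=(f_q-f_{q^{-1}})/(q-q^{-1})$; $f_1=1$. Fix $q^{1/2}$ and put $K=f_{q^{1/2}}$. $\mathcal{U}$ is a Hopf algebra with $\Delta E=E\otimes K+K^{-1}\otimes E$, $\Delta F=F\otimes K+K^{-1}\otimes F$, $\Delta G=1\otimes G+G\otimes1$, $\Delta f_\mu=f_\mu\otimes f_\mu$. Let $[k]=(q^k-q^{-k})/(q-q^{-1})$, $[k]!=[k]\cdots[1]$, $[0]!=1$, and $F^{(k)}=F^kK^{-k}/[k]!$, $E^{(k)}=K^{-k}E^k/[k]!$, $G^{(k)}=G^k/k!$. The elements $F^{(i)}f_\mu E^{(j)}G^{(k)}$ form a basis of $\mathcal{U}$.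 A right coideal is a subspace $\mathcal{X}$ with $\Delta(\mathcal{X})\subset\mathcal{X}\otimes\mathcal{U}$. *)

From HB Require Import structures.
From mathcomp Require Import all_boot all_order all_algebra.
From mathcomp Require Import complex Rstruct.
Set Implicit Arguments. Unset Strict Implicit. Unset Printing Implicit Defensive.
Import Order.TTheory GRing.Theory Num.Theory.
Local Open Scope ring_scope.

Definition C : numClosedFieldType := complex Rdefinitions.R.

Definition transcendental (q : C) : Prop :=
  forall p : {poly rat}, p != 0 -> ~~ root (map_poly ratr p) q.

Definition qint (q : C) (k : nat) : C := (q ^+ k - q^-1 ^+ k) / (q - q^-1).
Definition qfact (q : C) (k : nat) : C := \prod_(1 <= l < k.+1) qint q l.

Section Generators.
Variables (A : algType C) (q s : C) (E F G : A) (f : C -> A).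
(* s is the fixed square root q^{1/2}; K = f_{q^{1/2}}, Km = K^{-1} = f_{q^{-1/2}} *)
Definition Kel : A := f s.
Definition Kinv : A := f s^-1.

Definition U_relations : Prop :=
  [/\ forall mu nu, mu != 0 -> nu != 0 -> f mu * f nu = f (mu * nu),
      f 1 = 1,
   [/\ forall mu, mu != 0 -> f mu * E = mu ^+ 2 *: (E * f mu),
      forall mu, mu != 0 -> f mu * F = mu^-1 ^+ 2 *: (F * f mu)
    & forall mu, mu != 0 -> f mu * G = G * f mu] &
   [/\ G * E = E * (G + 2%:R%:A),
      G * F = F * (G - 2%:R%:A)
    & E * F - F * E = (q - q^-1)^-1 *: (f q - f q^-1)]].

Definition Fdiv (k : nat) : A := (qfact q k)^-1 *: (F ^+ k * Kinv ^+ k).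
Definition Ediv (k : nat) : A := (qfact q k)^-1 *: (Kinv ^+ k * E ^+ k).
Definition Gdiv (k : nat) : A := (k`!%:R : C)^-1 *: G ^+ k.

Definition mono (b : nat * C * nat * nat) : A :=
  let: (i, mu, j, k) := b in Fdiv i * f mu * Ediv j * Gdiv k.

Definition PBW_basis : Prop :=
  (forall (bs : seq (nat * C * nat * nat)) (c : nat * C * nat * nat -> C),
      uniq bs -> (forall b, b \in bs -> b.1.1.2 != 0) ->
      \sum_(b <- bs) c b *: mono b = 0 -> forall b, b \in bs -> c b = 0)
  /\ (forall a : A, exists (bs : seq (nat * C * nat * nat))
        (c : nat * C * nat * nat -> C),
        (forall b, b \in bs -> b.1.1.2 != 0) /\ a = \sum_(b <- bs) c b *: mono b).

Definition homog (mu : C) (a : A) : Prop :=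
  exists (ts : seq (nat * nat * nat)) (c : nat * nat * nat -> C),
    a = \sum_(t <- ts) c t *: mono (t.1.1, mu, t.1.2, t.2).
End Generators.

(* T together with tens : A -> A -> T is the tensor square A (x) A:
   tens is bilinear, multiplicative, and the pure tensors of basis
   monomials form a basis of T. *)
Definition tensor_square (A T : algType C) (mono : nat * C * nat * nat -> A)
  (tens : A -> A -> T) : Prop :=
  [/\ forall (a : C) x y z, tens (a *: x + y) z = a *: tens x z + tens y z,
      forall (a : C) x y z, tens x (a *: y + z) = a *: tens x y + tens x z,
      forall x y x' y', tens x y * tens x' y' = tens (x * x') (y * y'),
      (forall (bs : seq ((nat * C * nat * nat) * (nat * C * nat * nat)))
         (c : (nat * C * nat * nat) * (nat * C * nat * nat) -> C),
         uniq bs -> (forall b, b \in bs -> (b.1.1.1.2 != 0) && (b.2.1.1.2 != 0)) ->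
         \sum_(b <- bs) c b *: tens (mono b.1) (mono b.2) = 0 ->
         forall b, b \in bs -> c b = 0)
    & forall t : T, exists xs : seq (A * A),
        t = \sum_(p <- xs) tens p.1 p.2].

Definition coproduct (A T : algType C) (s : C) (E F G : A) (f : C -> A)
  (tens : A -> A -> T) (Delta : A -> T) : Prop :=
  [/\ forall (a : C) x y, Delta (a *: x + y) = a *: Delta x + Delta y,
      forall x y, Delta (x * y) = Delta x * Delta y,
      Delta 1 = 1 &
   [/\ Delta E = tens E (Kel s f) + tens (Kinv s f) E,
      Delta F = tens F (Kel s f) + tens (Kinv s f) F,
      Delta G = tens 1 G + tens G 1
    & forall mu, mu != 0 -> Delta (f mu) = tens (f mu) (f mu)]].

Definition subspace (A : algType C) (X : A -> Prop) : Prop :=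
  X 0 /\ forall (a : C) x y, X x -> X y -> X (a *: x + y).

Definition right_coideal (A T : algType C) (tens : A -> A -> T)
  (Delta : A -> T) (X : A -> Prop) : Prop :=
  subspace X /\
  forall x, X x -> exists xs : seq (A * A),
    (forall p, p \in xs -> X p.1) /\ Delta x = \sum_(p <- xs) tens p.1 p.2.

From HB Require Import structures.
From mathcomp Require Import all_boot all_order all_algebra.
From mathcomp Require Import ring.
Set Implicit Arguments. Unset Strict Implicit. Unset Printing Implicit Defensive.
Import GRing.Theory.
Local Open Scope ring_scope.

(* The coproduct of a PBW monomial F^(i) f_mu E^(j) G^(k) is that monomial tensor
   f_mu plus tensors whose right factors are multiples of ordered monomials
   F^a f_l E^b G^c of positive degree a + b + c, and those have zero coordinate
   on every grouplike f_nu.  Hence applying (coordinate) (x) (f_nu-coordinate) to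
   Delta x extracts the f_nu-component of x; when Delta x lies in X (x) U, the
   same functional exhibits that component as a linear combination of elements
   of X.  Directness of the sum of the [U]_mu is read off the PBW basis. *)

Lemma partition_big_undup (V : nmodType) (I J : eqType) (r : seq I)
    (h : I -> J) (F : I -> V) :
  \sum_(i <- r) F i = \sum_(j <- undup (map h r)) \sum_(i <- r | h i == j) F i.
Proof.
under [RHS]eq_bigr => j _ do rewrite big_mkcond /=.
rewrite exchange_big /=; apply: eq_big_seq => i ri.
rewrite (bigD1_seq (h i)) ?undup_uniq ?mem_undup ?map_f //= eqxx big1 ?addr0 //.
by move=> j; rewrite eq_sym => /negbTE ->.
Qed.

Section LinearFun.
Variables (R : pzRingType) (U : lmodType R) (V : zmodType).
Variables (s : GRing.Scale.law R V) (g : U -> V).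
Hypothesis g_lin : linear_for s g.
Let gL : {linear U -> V | s} := HB.pack g (GRing.isLinear.Build R U V s g g_lin).

Lemma linfun0 : g 0 = 0. Proof. exact: (linear0 gL). Qed.
Lemma linfunN x : g (- x) = - g x. Proof. exact: (linearN gL). Qed.
Lemma linfunB x y : g (x - y) = g x - g y. Proof. exact: (linearB gL). Qed.
Lemma linfunZ a x : g (a *: x) = s a (g x). Proof. exact: (linearZ_LR gL). Qed.
Lemma linfun_sum (I : Type) (r : seq I) (h : I -> U) :
  g (\sum_(i <- r) h i) = \sum_(i <- r) g (h i).
Proof. exact: (linear_sum gL). Qed.
End LinearFun.

Section Coordinates.
Variables (K : fieldType) (V : lmodType K) (I : choiceType).
Variables (ok : pred I) (m : I -> V).

Definition lcomb (l : seq (K * I)) : V := \sum_(p <- l) p.1 *: m p.2.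
Definition coef (b : I) (l : seq (K * I)) : K := \sum_(p <- l | p.2 == b) p.1.
Definition scale_coefs (k : K) (l : seq (K * I)) := [seq (k * p.1, p.2) | p <- l].

Lemma lcomb_cat l1 l2 : lcomb (l1 ++ l2) = lcomb l1 + lcomb l2.
Proof. exact: big_cat. Qed.

Lemma coef_cat b l1 l2 : coef b (l1 ++ l2) = coef b l1 + coef b l2.
Proof. exact: big_cat. Qed.

Lemma lcomb_scale k l : lcomb (scale_coefs k l) = k *: lcomb l.
Proof.
by rewrite /lcomb big_map scaler_sumr; apply: eq_bigr => p _; rewrite scalerA.
Qed.

Lemma coef_scale b k l : coef b (scale_coefs k l) = k * coef b l.
Proof. by rewrite /coef big_map mulr_sumr. Qed.

Lemma lcomb_partition l : lcomb l = \sum_(b <- undup (map snd l)) coef b l *: m b.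
Proof.
rewrite /lcomb (partition_big_undup _ snd); apply: eq_bigr => b _.
by rewrite scaler_suml; apply: eq_bigr => p /eqP ->.
Qed.

Hypothesis m_free : forall (bs : seq I) (c : I -> K), uniq bs ->
  (forall b, b \in bs -> ok b) -> \sum_(b <- bs) c b *: m b = 0 ->
  forall b, b \in bs -> c b = 0.

Lemma coef_eq0 l b : all (ok \o snd) l -> lcomb l = 0 -> coef b l = 0.
Proof.
move=> /allP l_ok; rewrite lcomb_partition => l0.
have [bl | bNl] := boolP (b \in undup (map snd l)).
  apply: (m_free (undup_uniq _) _ l0 bl) => b'.
  by rewrite mem_undup => /mapP [p /l_ok ? ->].
rewrite /coef big_seq_cond big1 // => p /andP [pl /eqP pb].
by move: bNl; rewrite mem_undup -pb map_f.
Qed.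

Lemma basis_neq0 b : ok b -> m b != 0.
Proof.
move=> okb; apply/eqP => mb0.
have b_ok b' : b' \in [:: b] -> ok b' by rewrite inE => /eqP ->.
suff /eqP : (1 : K) = 0 by rewrite oner_eq0.
apply: (m_free (bs := [:: b]) (c := fun=> 1) isT b_ok _ (mem_head b [::])).
by rewrite big_seq1 scale1r mb0.
Qed.

Hypothesis m_span : forall v, exists bs (c : I -> K),
  (forall b, b \in bs -> ok b) /\ v = \sum_(b <- bs) c b *: m b.

Lemma lcomb_surj v : exists l, all (ok \o snd) l && (lcomb l == v).
Proof.
have [bs [c [bs_ok ->]]] := m_span v.
exists [seq (c b, b) | b <- bs]; rewrite /lcomb big_map eqxx andbT.
by apply/allP => _ /mapP [b /bs_ok ? ->].
Qed.

Definition coords v : seq (K * I) := xchoose (lcomb_surj v).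
Definition coord b v : K := coef b (coords v).

Lemma coordsP v : all (ok \o snd) (coords v) /\ lcomb (coords v) = v.
Proof. by have /andP [? /eqP] := xchooseP (lcomb_surj v). Qed.

Lemma coord_lcomb b l : all (ok \o snd) l -> coord b (lcomb l) = coef b l.
Proof.
move=> l_ok; have [c_ok cE] := coordsP (lcomb l).
apply/eqP; rewrite -subr_eq0 -mulN1r -coef_scale -coef_cat; apply/eqP.
apply: coef_eq0; first by rewrite all_cat c_ok all_map.
by rewrite lcomb_cat lcomb_scale cE scaleN1r subrr.
Qed.

Lemma coord_is_scalar b : scalar (coord b).
Proof.
move=> k x y; have [x_ok xE] := coordsP x; have [y_ok yE] := coordsP y.
rewrite -{1}xE -{1}yE -lcomb_scale -lcomb_cat coord_lcomb ?coef_cat ?coef_scale //.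
by rewrite all_cat all_map x_ok y_ok.
Qed.

Lemma coordZ b k v : coord b (k *: v) = k * coord b v.
Proof. exact: (linfunZ (coord_is_scalar b)). Qed.
Lemma coord0 b : coord b 0 = 0.
Proof. exact: (linfun0 (coord_is_scalar b)). Qed.
Lemma coordN b v : coord b (- v) = - coord b v.
Proof. exact: (linfunN (coord_is_scalar b)). Qed.
Lemma coordB b u v : coord b (u - v) = coord b u - coord b v.
Proof. exact: (linfunB (coord_is_scalar b)). Qed.
Lemma coord_sum b (J : Type) (r : seq J) (h : J -> V) :
  coord b (\sum_(j <- r) h j) = \sum_(j <- r) coord b (h j).
Proof. exact: (linfun_sum (coord_is_scalar b)). Qed.

Lemma coord_basis b b' : ok b' -> coord b (m b') = (b' == b)%:R.
Proof.
move=> okb'; have -> : m b' = lcomb [:: (1, b')] by rewrite /lcomb big_seq1 scale1r.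
by rewrite coord_lcomb /= ?okb' // /coef big_mkcond big_seq1; case: (b' == b).
Qed.

Lemma coord_eq0 v : (forall b, coord b v = 0) -> v = 0.
Proof.
move=> v0; have [_ <-] := coordsP v; rewrite lcomb_partition big1 // => b _.
by rewrite -/(coord b v) v0 scale0r.
Qed.

End Coordinates.

Section TensorCoordinates.
Variables (K : fieldType) (V W : lmodType K) (I : choiceType).
Variables (ok : pred I) (m : I -> V) (tens : V -> V -> W).
Hypothesis m_free : forall (bs : seq I) (c : I -> K), uniq bs ->
  (forall b, b \in bs -> ok b) -> \sum_(b <- bs) c b *: m b = 0 ->
  forall b, b \in bs -> c b = 0.
Hypothesis m_span : forall v, exists bs (c : I -> K),
  (forall b, b \in bs -> ok b) /\ v = \sum_(b <- bs) c b *: m b.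
Hypotheses (tens_linl : forall z, linear (tens^~ z)) (tens_linr : forall z, linear (tens z)).
Hypothesis tens_free : forall (bs : seq (I * I)) (c : I * I -> K), uniq bs ->
  (forall b, b \in bs -> ok b.1 && ok b.2) ->
  \sum_(b <- bs) c b *: tens (m b.1) (m b.2) = 0 -> forall b, b \in bs -> c b = 0.

Local Notation coord := (coord m_span).
Local Notation coords := (coords m_span).

(* coord b (x) coord b', evaluated on a representation of an element of W as a
   sum of pure tensors; bicoord_eq shows it depends only on that element. *)
Definition bicoord (b b' : I) (ys : seq (V * V)) : K :=
  \sum_(p <- ys) coord b p.1 * coord b' p.2.

Lemma tens_lcomb (l1 l2 : seq (K * I)) : tens (lcomb m l1) (lcomb m l2) =
  \sum_(u <- l1) \sum_(v <- l2) (u.1 * v.1) *: tens (m u.2) (m v.2).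
Proof.
rewrite (linfun_sum (tens_linl _)); apply: eq_bigr => u _.
rewrite (linfunZ (tens_linl _)) (linfun_sum (tens_linr _)) /= scaler_sumr.
by apply: eq_bigr => v _; rewrite (linfunZ (tens_linr _)) /= scalerA.
Qed.

Lemma coef_mul (b b' : I) (l1 l2 : seq (K * I)) : coef b l1 * coef b' l2 =
  \sum_(u <- l1) \sum_(v <- l2) if (u.2, v.2) == (b, b') then u.1 * v.1 else 0.
Proof.
rewrite /coef big_mkcond mulr_suml; apply: eq_bigr => u _.
rewrite big_mkcond mulr_sumr; apply: eq_bigr => v _.
by rewrite xpair_eqE; case: (u.2 == b); case: (v.2 == b'); rewrite ?mulr0 ?mul0r.
Qed.

Lemma bicoord_eq0 b b' ys : \sum_(p <- ys) tens p.1 p.2 = 0 -> bicoord b b' ys = 0.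
Proof.
move=> ys0; pose L := flatten [seq [seq (u.1 * v.1, (u.2, v.2))
                        | u <- coords p.1, v <- coords p.2] | p <- ys].
have L_ok : all (fun r : K * (I * I) => ok r.2.1 && ok r.2.2) L.
  apply/allP => _ /flattenP [_ /mapP [p _ ->]] /allpairsPdep [u [v [u_p v_p ->]]].
  have /allP/(_ u u_p) := (coordsP m_span p.1).1.
  by have /allP/(_ v v_p) := (coordsP m_span p.2).1 => /= -> ->.
have L0 : lcomb (fun r : I * I => tens (m r.1) (m r.2)) L = 0.
  rewrite -ys0 /lcomb big_flatten big_map; apply: eq_bigr => p _.
  rewrite big_allpairs_dep -tens_lcomb.
  by rewrite (coordsP m_span p.1).2 (coordsP m_span p.2).2.
have := coef_eq0 (ok := fun r : I * I => ok r.1 && ok r.2) tens_free (b, b') L_ok L0.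
rewrite /coef big_mkcond big_flatten big_map => <-; apply: eq_bigr => p _.
by rewrite big_allpairs_dep coef_mul.
Qed.

Lemma bicoord_eq b b' ys ys' :
  \sum_(p <- ys) tens p.1 p.2 = \sum_(p <- ys') tens p.1 p.2 ->
  bicoord b b' ys = bicoord b b' ys'.
Proof.
move=> eq_ys; apply/eqP; rewrite -subr_eq0; apply/eqP.
have := bicoord_eq0 b b' (ys := ys ++ [seq (- p.1, p.2) | p <- ys']).
rewrite /bicoord !big_cat !big_map /=.
have -> : \sum_(p <- ys') tens (- p.1) p.2 = - \sum_(p <- ys') tens p.1 p.2.
  by rewrite -sumrN; apply: eq_bigr => p _; rewrite (linfunN (tens_linl _)).
have -> : \sum_(p <- ys') coord b (- p.1) * coord b' p.2 = - bicoord b b' ys'.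
  by rewrite -sumrN; apply: eq_bigr => p _; rewrite (coordN m_free) mulNr.
by rewrite eq_ys subrr; apply.
Qed.

Lemma bicoord_scale_cat b b' k ys1 ys2 :
  bicoord b b' ([seq (k *: p.1, p.2) | p <- ys1] ++ ys2) =
  k * bicoord b b' ys1 + bicoord b b' ys2.
Proof.
rewrite /bicoord big_cat big_map mulr_sumr /=; congr (_ + _).
by apply: eq_bigr => p _; rewrite (coordZ m_free) mulrA.
Qed.

End TensorCoordinates.

Lemma transcendental_neq0 q : transcendental q -> q != 0.
Proof. by move=> /(_ 'X); rewrite polyX_eq0 map_polyX rootX => /(_ isT). Qed.

Section Relations.
Variables (q : C) (A : algType C) (E F G : A) (f : C -> A).
Hypothesis hrel : U_relations q E F G f.

Lemma f_mul mu nu : mu != 0 -> nu != 0 -> f mu * f nu = f (mu * nu).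
Proof. by case: hrel => fM _ _ _; apply: fM. Qed.

Lemma f1 : f 1 = 1.
Proof. by case: hrel. Qed.

Lemma f_mulE mu : mu != 0 -> f mu * E = mu ^+ 2 *: (E * f mu).
Proof. by case: hrel => _ _ [fE _ _] _; apply: fE. Qed.

Lemma f_mulF mu : mu != 0 -> f mu * F = mu^-1 ^+ 2 *: (F * f mu).
Proof. by case: hrel => _ _ [_ fF _] _; apply: fF. Qed.

Lemma f_expn mu n : mu != 0 -> f mu ^+ n = f (mu ^+ n).
Proof.
move=> mu0; elim: n => [|n IHn]; first by rewrite !expr0 f1.
by rewrite exprS IHn f_mul ?expf_neq0 // -exprS.
Qed.

Lemma expE_mulf b mu : mu != 0 ->
  E ^+ b * f mu = (mu^-1 ^+ 2) ^+ b *: (f mu * E ^+ b).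
Proof.
move=> mu0; have E_f : E * f mu = mu^-1 ^+ 2 *: (f mu * E).
  by rewrite f_mulE // scalerA -exprMn mulVf // expr1n scale1r.
elim: b => [|b IHb]; first by rewrite !expr0 mul1r mulr1 scale1r.
by rewrite exprSr -[in LHS]mulrA E_f -scalerAr [in LHS]mulrA IHb -scalerAl scalerA -exprS mulrA.
Qed.

Lemma f_expn_mulV mu n : mu != 0 -> f (mu ^+ n) * f (mu^-1 ^+ n) = 1.
Proof. by move=> mu0; rewrite f_mul ?expf_neq0 ?invr_eq0 // -exprMn mulfV // expr1n f1. Qed.

(* Right tensor factors occurring in the coproducts of PBW monomials; n bounds
   the degree in E, F, G from below. *)
Definition Fterm n v :=
  exists a l d, [/\ (n <= a)%N, l != 0 & v = d *: (F ^+ a * f l)].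
Definition Eterm n v :=
  exists b l d, [/\ (n <= b)%N, l != 0 & v = d *: (f l * E ^+ b)].
Definition Gterm n v := exists c d, (n <= c)%N /\ v = d *: G ^+ c.
Definition FEGterm n v := exists a l b c d,
  [/\ (n <= a + b + c)%N, l != 0 & v = d *: (F ^+ a * f l * E ^+ b * G ^+ c)].

Lemma Fterm_f mu : mu != 0 -> Fterm 0 (f mu).
Proof. by exists 0%N, mu, 1; rewrite mul1r scale1r. Qed.

Lemma Eterm_f mu : mu != 0 -> Eterm 0 (f mu).
Proof. by exists 0%N, mu, 1; rewrite mulr1 scale1r. Qed.

Lemma Gterm1 : Gterm 0 1.
Proof. by exists 0%N, 1; rewrite scale1r. Qed.

Lemma Fterm_le m n v : (m <= n)%N -> Fterm n v -> Fterm m v.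
Proof. by move=> mn [a [l [d [na ? ?]]]]; exists a, l, d; split=> //; apply: leq_trans na. Qed.

Lemma Eterm_le m n v : (m <= n)%N -> Eterm n v -> Eterm m v.
Proof. by move=> mn [b [l [d [nb ? ?]]]]; exists b, l, d; split=> //; apply: leq_trans nb. Qed.

Lemma Gterm_le m n v : (m <= n)%N -> Gterm n v -> Gterm m v.
Proof. by move=> mn [c [d [nc ?]]]; exists c, d; split=> //; apply: leq_trans nc. Qed.

Lemma FEGterm_le m n v : (m <= n)%N -> FEGterm n v -> FEGterm m v.
Proof.
move=> mn [a [l [b [c [d [nabc ? ?]]]]]]; exists a, l, b, c, d.
by split=> //; apply: leq_trans nabc.
Qed.

Lemma Fterm_mulf n v mu : mu != 0 -> Fterm n v -> Fterm n (v * f mu).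
Proof.
move=> mu0 [a [l [d [na l0 ->]]]]; exists a, (l * mu), d.
by rewrite mulf_neq0 // -scalerAl -mulrA f_mul.
Qed.

Lemma Fterm_mulF n v : Fterm n v -> Fterm n.+1 (v * F).
Proof.
move=> [a [l [d [na l0 ->]]]]; exists a.+1, l, (d * l^-1 ^+ 2).
by rewrite ltnS na -scalerAl -mulrA f_mulF // -scalerAr scalerA (mulrA (F ^+ a)) -exprSr.
Qed.

Lemma Eterm_mulf n v mu : mu != 0 -> Eterm n v -> Eterm n (v * f mu).
Proof.
move=> mu0 [b [l [d [nb l0 ->]]]]; exists b, (l * mu), (d * (mu^-1 ^+ 2) ^+ b).
by rewrite mulf_neq0 // -scalerAl -mulrA expE_mulf // -scalerAr scalerA mulrA f_mul.
Qed.

Lemma f_mulEterm n v mu : mu != 0 -> Eterm n v -> Eterm n (f mu * v).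
Proof.
move=> mu0 [b [l [d [nb l0 ->]]]]; exists b, (mu * l), d.
by rewrite mulf_neq0 // -scalerAr mulrA f_mul.
Qed.

Lemma Eterm_mulE n v : Eterm n v -> Eterm n.+1 (v * E).
Proof.
move=> [b [l [d [nb l0 ->]]]]; exists b.+1, l, d.
by rewrite ltnS nb -scalerAl -mulrA -exprSr.
Qed.

Lemma Gterm_mulG n v : Gterm n v -> Gterm n.+1 (v * G).
Proof. by move=> [c [d [nc ->]]]; exists c.+1, d; rewrite ltnS nc -scalerAl -exprSr. Qed.

Lemma Fterm_mulEterm m n v w : Fterm m v -> Eterm n w -> FEGterm (m + n) (v * w).
Proof.
move=> [a [l [d [ma l0 ->]]]] [b [l' [d' [nb l'0 ->]]]].
exists a, (l * l'), b, 0%N, (d * d'); split; first by rewrite addn0 leq_add.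
  by rewrite mulf_neq0.
rewrite expr0 mulr1 -scalerAl -scalerAr scalerA; congr (_ *: _).
by rewrite -f_mul // !mulrA.
Qed.

Lemma FEGterm_mulGterm m n v w : FEGterm m v -> Gterm n w -> FEGterm (m + n) (v * w).
Proof.
move=> [a [l [b [c [d [mabc l0 ->]]]]]] [c' [d' [nc' ->]]].
exists a, l, b, (c + c')%N, (d * d'); split => //; first by rewrite addnA leq_add.
by rewrite -scalerAl -scalerAr scalerA exprD mulrA.
Qed.

End Relations.

Section Monomials.
Variables (q s : C) (A : algType C) (E F G : A) (f : C -> A).
Hypotheses (hrel : U_relations q E F G f) (s_neq0 : s != 0).
Hypothesis hbasis : PBW_basis q s E F G f.

Local Notation mono := (mono q s E F G f).
Local Notation coord := (coord hbasis.2).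

Lemma mono_expand a l b c : l != 0 -> mono (a, l, b, c) =
  ((qfact q a)^-1 * (qfact q b)^-1 * (c`!%:R)^-1) *:
    (F ^+ a * f (s^-1 ^+ a * l * s^-1 ^+ b) * E ^+ b * G ^+ c).
Proof.
have sV0 : s^-1 != 0 by rewrite invr_eq0.
have sVX0 n : s^-1 ^+ n != 0 by rewrite expf_neq0.
move=> l0; rewrite /= /Fdiv /Ediv /Gdiv /Kinv !(f_expn hrel) //.
rewrite -!scalerAl -!scalerAr -!scalerAl !scalerA; congr (_ *: _); first by ring.
rewrite -(f_mul hrel (mu := s^-1 ^+ a * l)) ?mulf_neq0 //.
by rewrite -(f_mul hrel (mu := s^-1 ^+ a)) // !mulrA.
Qed.

Lemma FEGterm_mono a l b c : l != 0 -> exists k,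
  F ^+ a * f l * E ^+ b * G ^+ c = k *: mono (a, l * s ^+ (a + b), b, c).
Proof.
move=> l0; have l'0 : l * s ^+ (a + b) != 0 by rewrite mulf_neq0 ?expf_neq0.
have := mono_expand a b c l'0.
have -> : s^-1 ^+ a * (l * s ^+ (a + b)) * s^-1 ^+ b = l.
  by rewrite exprD !exprVn; field; rewrite !expf_neq0.
set k := _ * _ * _ => monoE.
(* k involves inverses of q-factorials; it is nonzero because basis vectors are. *)
have k0 : k != 0.
  apply: contraNneq (basis_neq0 hbasis.1 (b := (a, _, b, c)) l'0) => k0.
  by rewrite monoE k0 scale0r.
by exists k^-1; rewrite monoE scalerA mulVf // scale1r.
Qed.

Lemma f_mono mu : f mu = mono (0, mu, 0, 0)%N.
Proof. by rewrite /= /Fdiv /Ediv /Gdiv /qfact big_geq // !expr0 invr1 !scale1r !mulr1 mul1r. Qed.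

Lemma coord_f b mu : mu != 0 -> coord b (f mu) = ((0, mu, 0, 0)%N == b)%:R.
Proof. by move=> mu0; rewrite f_mono (coord_basis hbasis.1). Qed.

Lemma coord_f_FEGterm nu v : FEGterm E F G f 1 v -> coord (0, nu, 0, 0)%N v = 0.
Proof.
move=> [a [l [b [c [d [abc l0 ->]]]]]]; have [k ->] := FEGterm_mono a b c l0.
rewrite (coordZ hbasis.1) (coordZ hbasis.1) (coord_basis hbasis.1) ?mulf_neq0 ?expf_neq0 //.
case: eqP => [[a0 _ b0 c0] | _]; last by rewrite !mulr0.
by move: abc; rewrite a0 b0 c0.
Qed.

End Monomials.

Section Coproduct.
Variables (q s : C) (A : algType C) (E F G : A) (f : C -> A).
Variables (T : algType C) (tens : A -> A -> T) (Delta : A -> T).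
Hypotheses (hrel : U_relations q E F G f) (s_neq0 : s != 0).
Hypothesis htens : tensor_square (mono q s E F G f) tens.
Hypothesis hDelta : coproduct s E F G f tens Delta.

Local Notation mono := (mono q s E F G f).
Local Notation Fterm := (Fterm F f).
Local Notation Eterm := (Eterm E f).
Local Notation Gterm := (Gterm G).
Local Notation FEGterm := (FEGterm E F G f).

Lemma tens_linl z : linear (tens^~ z).
Proof. by case: htens => tl _ _ _ _ a x y; apply: tl. Qed.

Lemma tens_linr z : linear (tens z).
Proof. by case: htens => _ tr _ _ _ a x y; apply: tr. Qed.

Lemma tens_mul x y x' y' : tens x y * tens x' y' = tens (x * x') (y * y').
Proof. by case: htens => _ _ tM _ _; apply: tM. Qed.

Lemma Delta_lin : linear Delta.
Proof. by case: hDelta => DZ _ _ _ a x y; apply: DZ. Qed.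

Lemma Delta_mul x y : Delta (x * y) = Delta x * Delta y.
Proof. by case: hDelta => _ DM _ _; apply: DM. Qed.

Lemma Delta1 : Delta 1 = 1.
Proof. by case: hDelta. Qed.

Lemma Delta_f mu : mu != 0 -> Delta (f mu) = tens (f mu) (f mu).
Proof. by case: hDelta => _ _ _ [_ _ _ Df]; apply: Df. Qed.

Lemma tens11 : tens 1 1 = 1.
Proof. by rewrite -(f1 hrel) -Delta_f ?oner_eq0 // (f1 hrel) Delta1. Qed.

Inductive tens_span (P : A -> Prop) : T -> Prop :=
  | tens_span0 : tens_span P 0
  | tens_spanD y v r : P v -> tens_span P r -> tens_span P (tens y v + r).

Lemma tens_span1 (P : A -> Prop) y v : P v -> tens_span P (tens y v).
Proof. by move=> Pv; rewrite -[tens y v]addr0; apply: tens_spanD (tens_span0 _). Qed.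

Lemma tens_span_add P t1 t2 :
  tens_span P t1 -> tens_span P t2 -> tens_span P (t1 + t2).
Proof.
move=> + P2; elim=> [|y v r Pv _ IHr]; first by rewrite add0r.
by rewrite -addrA; apply: tens_spanD.
Qed.

Lemma tens_spanZ P k t : tens_span P t -> tens_span P (k *: t).
Proof.
elim=> [|y v r Pv _ IHr]; first by rewrite scaler0; apply: tens_span0.
by rewrite scalerDr -(linfunZ (tens_linl _)); apply: tens_spanD.
Qed.

Lemma tens_span_mul (P1 P2 P : A -> Prop) t1 t2 :
  (forall v w, P1 v -> P2 w -> P (v * w)) ->
  tens_span P1 t1 -> tens_span P2 t2 -> tens_span P (t1 * t2).
Proof.
move=> P12 + P2t2; elim=> [|y v r P1v _ IHr]; first by rewrite mul0r; apply: tens_span0.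
rewrite mulrDl; apply: tens_span_add => //.
elim: P2t2 {IHr} => [|y' w r' P2w _ IHr']; first by rewrite mulr0; apply: tens_span0.
by rewrite mulrDr tens_mul; apply: tens_spanD => //; apply: P12.
Qed.

Lemma tens_span_seq P t : tens_span P t -> exists2 ys : seq (A * A),
  (forall p, p \in ys -> P p.2) & t = \sum_(p <- ys) tens p.1 p.2.
Proof.
elim=> [|y v r Pv _ [ys ysP ->]]; first by exists [::]; rewrite ?big_nil.
exists ((y, v) :: ys); last by rewrite big_cons.
by move=> p; rewrite inE => /predU1P [-> //|]; apply: ysP.
Qed.

Lemma Delta_expn (x k k' : A) (P : A -> Prop) :
  Delta x = tens x k + tens k' x ->
  (forall i, P (k ^+ i * x)) ->
  (forall v, P v -> P (v * k)) -> (forall v, P v -> P (v * x)) ->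
  forall i, exists2 t, tens_span P t & Delta (x ^+ i) = tens (x ^+ i) (k ^+ i) + t.
Proof.
move=> Dx Plead Pk Px; elim=> [|i [t Pt Dxi]].
  by exists 0; rewrite ?addr0 ?expr0 ?Delta1 ?tens11 //; apply: tens_span0.
exists (tens (x ^+ i * k') (k ^+ i * x) + t * Delta x).
  apply: tens_span_add; first exact: tens_span1.
  apply: (tens_span_mul (P2 := fun w => w = k \/ w = x) _ Pt).
    by move=> v w Pv [->|->]; [apply: Pk | apply: Px].
  by rewrite Dx; apply: tens_span_add; apply: tens_span1; [left|right].
by rewrite exprSr Delta_mul Dxi Dx mulrDl mulrDr !tens_mul -!exprSr addrA.
Qed.

Lemma Delta_Fdiv i : exists2 t, tens_span (Fterm 1) t &
  Delta (Fdiv q s F f i) = tens (Fdiv q s F f i) 1 + t.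
Proof.
have DF : Delta F = tens F (f s) + tens (f s^-1) F by case: hDelta => _ _ _ [].
have lead j : Fterm 1 (f s ^+ j * F).
  by rewrite (f_expn hrel) //; apply: (Fterm_mulF hrel); apply/Fterm_f/expf_neq0.
have [t Pt DFi] := Delta_expn DF lead (fun v => Fterm_mulf hrel s_neq0)
  (fun v Pv => Fterm_le (leqnSn 1) (Fterm_mulF hrel Pv)) i.
have sVX0 : s^-1 ^+ i != 0 by rewrite expf_neq0 ?invr_eq0.
exists ((qfact q i)^-1 *: (t * tens (f (s^-1 ^+ i)) (f (s^-1 ^+ i)))).
  apply/tens_spanZ/(tens_span_mul _ Pt (tens_span1 _ (erefl _))) => v _ Pv <-.
  exact: (Fterm_mulf hrel).
rewrite /Fdiv /Kinv (linfunZ Delta_lin) /= Delta_mul DFi !(f_expn hrel) ?invr_eq0 //.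
rewrite Delta_f // mulrDl tens_mul (f_expn_mulV hrel) //.
by rewrite scalerDr (linfunZ (tens_linl _)).
Qed.

Lemma Delta_Ediv j : exists2 t, tens_span (Eterm 1) t &
  Delta (Ediv q s E f j) = tens (Ediv q s E f j) 1 + t.
Proof.
have DE : Delta E = tens E (f s) + tens (f s^-1) E by case: hDelta => _ _ _ [].
have lead i : Eterm 1 (f s ^+ i * E).
  by rewrite (f_expn hrel) //; apply/Eterm_mulE/Eterm_f/expf_neq0.
have [t Pt DEj] := Delta_expn DE lead (fun v => Eterm_mulf hrel s_neq0)
  (fun v Pv => Eterm_le (leqnSn 1) (Eterm_mulE Pv)) j.
have sVX0 : s^-1 ^+ j != 0 by rewrite expf_neq0 ?invr_eq0.
exists ((qfact q j)^-1 *: (tens (f (s^-1 ^+ j)) (f (s^-1 ^+ j)) * t)).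
  apply/tens_spanZ/(tens_span_mul _ (tens_span1 _ (erefl _)) Pt) => _ w <- Pw.
  exact: (f_mulEterm hrel).
have KVK : f (s^-1 ^+ j) * f (s ^+ j) = 1.
  by have := f_expn_mulV hrel j (invr_neq0 s_neq0); rewrite invrK.
rewrite /Ediv /Kinv (linfunZ Delta_lin) /= Delta_mul DEj !(f_expn hrel) ?invr_eq0 //.
by rewrite Delta_f // mulrDr tens_mul KVK scalerDr (linfunZ (tens_linl _)).
Qed.

Lemma Delta_Gdiv k : exists2 t, tens_span (Gterm 1) t &
  Delta (Gdiv G k) = tens (Gdiv G k) 1 + t.
Proof.
have DG : Delta G = tens G 1 + tens 1 G by rewrite addrC; case: hDelta => _ _ _ [].
have lead i : Gterm 1 (1 ^+ i * G) by rewrite expr1n; apply/Gterm_mulG/Gterm1.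
have mul1 v : Gterm 1 v -> Gterm 1 (v * 1) by rewrite mulr1.
have [t Pt DGk] := Delta_expn DG lead mul1
  (fun v Pv => Gterm_le (leqnSn 1) (Gterm_mulG Pv)) k.
exists ((k`!%:R)^-1 *: t); first exact: tens_spanZ.
by rewrite /Gdiv (linfunZ Delta_lin) /= DGk expr1n scalerDr (linfunZ (tens_linl _)).
Qed.

Lemma tens_lead_mul (P Q R : nat -> A -> Prop) x0 y0 v0 w0 X Y :
  (forall m n v w, P m v -> Q n w -> R (m + n)%N (v * w)) ->
  (forall v, R 2 v -> R 1 v) ->
  P 0 v0 -> Q 0 w0 -> tens_span (P 1) X -> tens_span (Q 1) Y ->
  exists2 Z, tens_span (R 1) Z &
    (tens x0 v0 + X) * (tens y0 w0 + Y) = tens (x0 * y0) (v0 * w0) + Z.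
Proof.
move=> PQR R21 Pv0 Qw0 PX QY.
exists (tens x0 v0 * Y + X * tens y0 w0 + X * Y); last first.
  by rewrite mulrDl !mulrDr tens_mul !addrA.
apply: tens_span_add; first apply: tens_span_add.
- by apply: tens_span_mul (tens_span1 _ (erefl v0)) QY => _ w <-; apply: (PQR 0%N 1%N).
- by apply: tens_span_mul PX (tens_span1 _ (erefl w0)) => v _ Pv <-; apply: (PQR 1%N 0%N).
- by apply: tens_span_mul PX QY => v w Pv Qw; apply/R21/(PQR 1%N 1%N).
Qed.

Lemma Delta_mono i mu j k : mu != 0 -> exists2 t, tens_span (FEGterm 1) t &
  Delta (mono (i, mu, j, k)) = tens (mono (i, mu, j, k)) (f mu) + t.
Proof.
move=> mu0; have [tF PF DF] := Delta_Fdiv i.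
have [tE PE DE] := Delta_Ediv j; have [tG PG DG] := Delta_Gdiv k.
have FE m n v w : Fterm m v -> Eterm n w -> FEGterm (m + n) (v * w).
  exact: (Fterm_mulEterm hrel).
have FEG m n v w : FEGterm m v -> Gterm n w -> FEGterm (m + n) (v * w).
  exact: FEGterm_mulGterm.
have F1 : Fterm 0 1 by rewrite -(f1 hrel); apply/Fterm_f/oner_neq0.
have Ef : Eterm 0 (f mu) by apply: Eterm_f.
have DfE : Delta (f mu * Ediv q s E f j) =
    tens (f mu * Ediv q s E f j) (f mu) + tens (f mu) (f mu) * tE.
  by rewrite Delta_mul Delta_f // DE mulrDr tens_mul mulr1.
have PfE : tens_span (Eterm 1) (tens (f mu) (f mu) * tE).
  apply: tens_span_mul (tens_span1 _ (erefl (f mu))) PE => _ w <-.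
  exact: (f_mulEterm hrel).
have FEG21 v : FEGterm 2 v -> FEGterm 1 v by apply: FEGterm_le.
have [Z1 PZ1 DFfE] := tens_lead_mul
  (Fdiv q s F f i) (f mu * Ediv q s E f j) FE FEG21 F1 Ef PF PfE.
have [Z2 PZ2 DFfEG] := tens_lead_mul (Fdiv q s F f i * (f mu * Ediv q s E f j))
  (Gdiv G k) FEG FEG21 (FE _ _ _ _ F1 Ef) (Gterm1 G) PZ1 PG.
exists Z2 => //; rewrite /= -(mulrA (Fdiv q s F f i)) Delta_mul Delta_mul.
by rewrite DF DfE DFfE DG DFfEG mul1r mulr1.
Qed.

End Coproduct.

Lemma subspace_lincomb (A : algType C) (X : A -> Prop) (J : eqType) (r : seq J)
    (k : J -> C) (g : J -> A) :
  subspace X -> (forall j, j \in r -> X (g j)) -> X (\sum_(j <- r) k j *: g j).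
Proof.
move=> [X0 XD]; elim: r => [|j r IHr] Xg; first by rewrite big_nil.
rewrite big_cons; apply: XD; first by apply: Xg; rewrite mem_head.
by apply: IHr => j' j'r; apply: Xg; rewrite inE j'r orbT.
Qed.

Section HomogeneousComponents.
Variables (q s : C) (A : algType C) (E F G : A) (f : C -> A).
Variables (T : algType C) (tens : A -> A -> T) (Delta : A -> T).
Hypotheses (hrel : U_relations q E F G f) (s_neq0 : s != 0).
Hypothesis hbasis : PBW_basis q s E F G f.
Hypothesis htens : tensor_square (mono q s E F G f) tens.
Hypothesis hDelta : coproduct s E F G f tens Delta.

Local Notation mono := (mono q s E F G f).
Local Notation homog := (homog q s E F G f).
Local Notation coord := (coord hbasis.2).
Local Notation bicoord := (bicoord hbasis.2).
Local Notation weight b := (b : nat * C * nat * nat).1.1.2.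

Lemma coord_homog nu y b : nu != 0 -> homog nu y -> weight b != nu -> coord b y = 0.
Proof.
move=> nu0 [ts [c ->]] bnu; rewrite (coord_sum hbasis.1) big1 // => t _.
rewrite (coordZ hbasis.1) (coord_basis hbasis.1) //.
case: eqP => [tb | _]; last by rewrite mulr0.
by rewrite -tb eqxx in bnu.
Qed.

Lemma homog_coord nu y : (forall b, weight b != nu -> coord b y = 0) -> homog nu y.
Proof.
move=> y_nu; have [_ <-] := coordsP hbasis.2 y.
pose B := [seq b <- undup (map snd (coords hbasis.2 y)) | weight b == nu].
exists [seq (b.1.1.1, b.1.2, b.2) | b <- B], (fun t => coord (t.1.1, nu, t.1.2, t.2) y).
rewrite lcomb_partition big_map big_filter_cond [RHS]big_mkcond; apply: eq_bigr => b _.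
rewrite andbT -/(coord b y); case: eqP => [<- | /eqP bnu]; last by rewrite y_nu ?scale0r.
by case: b => [[[]]].
Qed.

Lemma tens_basis_free : forall (bs : seq ((nat * C * nat * nat) * (nat * C * nat * nat)))
    (c : (nat * C * nat * nat) * (nat * C * nat * nat) -> C),
  uniq bs -> (forall b, b \in bs -> (weight b.1 != 0) && (weight b.2 != 0)) ->
  \sum_(b <- bs) c b *: tens (mono b.1) (mono b.2) = 0 -> forall b, b \in bs -> c b = 0.
Proof. by case: htens. Qed.

Lemma bicoord_Delta_mono_ex b b0 nu : weight b0 != 0 -> nu != 0 ->
  exists2 ys, Delta (mono b0) = \sum_(p <- ys) tens p.1 p.2 &
    bicoord b (0, nu, 0, 0)%N ys = (weight b == nu)%:R * coord b (mono b0).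
Proof.
case: b0 => [[[i mu] j] k] /= mu0 nu0.
have [t Pt ->] := Delta_mono hrel s_neq0 htens hDelta i j k mu0.
have [zs zsP ->] := tens_span_seq Pt.
exists ((mono (i, mu, j, k), f mu) :: zs); first by rewrite big_cons.
rewrite /bicoord big_cons big_seq big1 => [|p /zsP]; last first.
  by move/(coord_f_FEGterm hrel s_neq0) => ->; rewrite mulr0.
rewrite addr0 (coord_f hbasis) // (coord_basis hbasis.1) //.
case: (eqVneq (i, mu, j, k) b) => [<- | neq]; last by rewrite !mul0r mulr0.
by rewrite !xpair_eqE !eqxx /= !andbT mul1r mulr1 eq_sym.
Qed.

Lemma bicoord_Delta_ex b nu z : nu != 0 ->
  exists2 ys, Delta z = \sum_(p <- ys) tens p.1 p.2 &
  bicoord b (0, nu, 0, 0)%N ys = (weight b == nu)%:R * coord b z.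
Proof.
move=> nu0; have [l_ok <-] := coordsP hbasis.2 z.
elim: (coords _ z) l_ok => [_ | [k b0] l IHl /andP [/= b0_ok /IHl [ys2 D2 c2]]].
  exists [::]; first by rewrite /lcomb !big_nil (linfun0 (Delta_lin hDelta)).
  by rewrite /bicoord /lcomb !big_nil (coord0 hbasis.1) mulr0.
have [ys1 D1 c1] := bicoord_Delta_mono_ex b b0_ok nu0.
exists ([seq (k *: p.1, p.2) | p <- ys1] ++ ys2).
  rewrite /lcomb big_cons -/(lcomb _ l) (Delta_lin hDelta) D1 D2 big_cat big_map.
  rewrite scaler_sumr; congr (_ + _); apply: eq_bigr => p _.
  by rewrite (linfunZ (tens_linl htens _)).
rewrite (bicoord_scale_cat hbasis.1) c1 c2 /lcomb big_cons -/(lcomb _ l).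
by rewrite (coord_is_scalar hbasis.1) mulrDr mulrCA.
Qed.

Lemma bicoord_Delta b nu z ys : nu != 0 -> Delta z = \sum_(p <- ys) tens p.1 p.2 ->
  bicoord b (0, nu, 0, 0)%N ys = (weight b == nu)%:R * coord b z.
Proof.
move=> nu0 Dz; have [ys' Dz' <-] := bicoord_Delta_ex b z nu0.
by apply: (bicoord_eq hbasis.1 _ (tens_linl htens) (tens_linr htens) tens_basis_free); rewrite -Dz.
Qed.

Lemma right_coideal_homog_decomp (X : A -> Prop) x :
  right_coideal tens Delta X -> X x ->
  exists (mus : seq C) (xs : C -> A),
    [/\ uniq mus, forall mu, mu \in mus -> [/\ mu != 0, X (xs mu) & homog mu (xs mu)]
      & x = \sum_(mu <- mus) xs mu].
Proof.
move=> [Xsub Xco] Xx; have [ys [ysX Dx]] := Xco x Xx.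
pose comp nu := \sum_(p <- ys) coord (0, nu, 0, 0)%N p.2 *: p.1.
have coord_comp b nu : nu != 0 -> coord b (comp nu) = (weight b == nu)%:R * coord b x.
  move=> nu0; rewrite -(bicoord_Delta b nu0 Dx) (coord_sum hbasis.1).
  by apply: eq_bigr => p _; rewrite (coordZ hbasis.1) mulrC.
have [x_ok _] := coordsP hbasis.2 x.
pose mus := undup [seq weight p.2 | p <- coords hbasis.2 x].
have mus0 mu : mu \in mus -> mu != 0.
  by rewrite mem_undup => /mapP [p /(allP x_ok) ? ->].
have coord_mus b : weight b \notin mus -> coord b x = 0.
  move=> bNmus; rewrite /coord /coef big_seq_cond big1 // => p /andP [px /eqP pb].
  by move: bNmus; rewrite mem_undup -pb (map_f (fun p : C * _ => weight p.2) px).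
exists mus, comp; split; first exact: undup_uniq.
  move=> mu mu_mus; split; first exact: mus0.
    by apply: subspace_lincomb => // p; apply: ysX.
  by apply: homog_coord => b bmu; rewrite coord_comp ?mus0 // (negbTE bmu) mul0r.
apply/eqP; rewrite -subr_eq0; apply/eqP; apply: (coord_eq0 (m_span := hbasis.2)) => b.
rewrite (coordB hbasis.1) (coord_sum hbasis.1) big_seq.
under eq_bigr => nu nu_mus do rewrite coord_comp ?mus0 //.
have [bmus | bNmus] := boolP (weight b \in mus).
  have rest : \sum_(nu <- mus | nu != weight b) (weight b == nu)%:R * coord b x = 0.
    by rewrite big1 // => nu; rewrite eq_sym => /negbTE ->; rewrite mul0r.
  by rewrite -big_seq (bigD1_seq (weight b)) ?undup_uniq //= rest eqxx mul1r addr0 subrr.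
rewrite big1 ?coord_mus ?subrr // => nu nu_mus.
suff /negbTE -> : weight b != nu by rewrite mul0r.
by apply: contraNneq bNmus => ->.
Qed.

Lemma homog_sum_direct (mus : seq C) (ys : C -> A) : uniq mus ->
  (forall mu, mu \in mus -> mu != 0 /\ homog mu (ys mu)) ->
  \sum_(mu <- mus) ys mu = 0 -> forall mu, mu \in mus -> ys mu = 0.
Proof.
move=> mus_uniq ys_homog sum0 mu mu_mus; apply: (coord_eq0 (m_span := hbasis.2)) => b.
have [mu0 hom] := ys_homog mu mu_mus.
have [bmu | bmu] := eqVneq (weight b) mu; last exact: coord_homog mu0 hom bmu.
have rest : \sum_(nu <- mus | nu != mu) coord b (ys nu) = 0.
  rewrite big_seq_cond big1 // => nu /andP [nu_mus nu_mu].
  have [nu0 hom_nu] := ys_homog nu nu_mus.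
  by apply: coord_homog nu0 hom_nu _; rewrite bmu eq_sym.
have := congr1 (coord b) sum0.
by rewrite (coord_sum hbasis.1) (coord0 hbasis.1) (bigD1_seq mu) //= rest addr0.
Qed.

End HomogeneousComponents.

Theorem corollary4p2
  (q s : C) (hq : transcendental q) (hs : s ^+ 2 = q)
  (A : algType C) (E F G : A) (f : C -> A)
  (hrel : U_relations q E F G f)
  (hbasis : PBW_basis q s E F G f)
  (T : algType C) (tens : A -> A -> T)
  (htens : tensor_square (mono q s E F G f) tens)
  (Delta : A -> T) (hDelta : coproduct s E F G f tens Delta)
  (X : A -> Prop) (hX : right_coideal tens Delta X) :
  (forall x, X x ->
     exists (mus : seq C) (xs : C -> A),
       [/\ uniq mus,
           forall mu, mu \in mus ->
             [/\ mu != 0, X (xs mu) & homog q s E F G f mu (xs mu)]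
         & x = \sum_(mu <- mus) xs mu])
  /\
  (forall (mus : seq C) (ys : C -> A),
     uniq mus ->
     (forall mu, mu \in mus -> mu != 0 /\ homog q s E F G f mu (ys mu)) ->
     \sum_(mu <- mus) ys mu = 0 ->
     forall mu, mu \in mus -> ys mu = 0).
Proof.
(* Transcendence of q is only needed through q != 0. *)
have s0 : s != 0 by apply: contraNneq (transcendental_neq0 hq) => s0; rewrite -hs s0 expr0n.
split; first by move=> x; apply: (right_coideal_homog_decomp hrel s0 hbasis htens hDelta hX).
exact: (homog_sum_direct hbasis).
Qed.
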